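(* For every $\alpha \in (0,1)$ and every $A > 0$ there exists $C = C(\alpha, A)$ such that the following holds. Let $m \ge 4$ be an integer and let $b = (b_1,\ldots,b_m) \in \mathbb{R}^m$ satisfy $\|b\|_{1,\infty} \le 1$ and $\|b\|_1 \ge C (\log\log m)^2$. Then there exist a positive integer $l$ with $A \log\log m \le l \le \log m$ and a subset $I_1 \subseteq [m]$ such that the following holds: for every vector $\lambda = (\lambda_i)_{i \in I_1}$ with $\|\lambda\|_1 \le 1$ there exists a subset $I_2 \subseteq I_1$ such that, writing $n_1 := |I_1|$ and $n_2 := |I_2|$, (i) $2^{l/2} \le \frac{m}{n_1} \le \frac{m}{n_2} \le \big(\frac{m}{n_1}\big)^{1+\alpha}$; (ii) $|b_i| \ge \frac{1}{l n_1}$ for all $i \in I_1$, and $|b_i| \ge \frac{1}{l n_2}$ and $|b_i| \ge 2|\lambda_i|$ for all $i \in I_2$.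
   Context: $[m] = \{1,\ldots,m\}$. For a finite sequence $a = (a_i)$, $(|a|^*_i)$ denotes the non-increasing rearrangement of $(|a_i|)$; the weak $\ell_1$ norm $\|a\|_{1,\infty}$ is the infimum of $M > 0$ such that $|a|^*_i \le M i^{-1}$ for all $i$. $\|a\|_1 = \sum_i |a_i|$. All logarithms are to base $2$. *)

From HB Require Import structures.
From mathcomp Require Import all_boot all_order all_algebra.
From mathcomp Require Import all_classical all_reals all_analysis.
Set Implicit Arguments. Unset Strict Implicit. Unset Printing Implicit Defensive.
Import Order.TTheory GRing.Theory Num.Theory.
Local Open Scope ring_scope.
Local Open Scope classical_set_scope.

Definition log2 {R : realType} (x : R) : R := ln x / ln 2.

Definition rearr {R : realType} {m : nat} (a : 'I_m -> R) : seq R :=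
  sort (fun x y : R => y <= x) [seq `|a i| | i <- enum 'I_m].

(* |a|^*_i for i = 1..m  (1-based) *)
Definition rearr_at {R : realType} {m : nat} (a : 'I_m -> R) (i : nat) : R :=
  nth 0 (rearr a) i.-1.

Definition weak_l1_norm {R : realType} {m : nat} (a : 'I_m -> R) : R :=
  inf [set M : R | 0 < M /\ forall i : nat, (1 <= i <= m)%N ->
        rearr_at a i <= M / i%:R].

Definition l1_norm {R : realType} {m : nat} (a : 'I_m -> R) : R :=
  \sum_(i < m) `|a i|.

From HB Require Import structures.
From mathcomp Require Import all_boot all_order all_algebra.
From mathcomp Require Import all_classical all_reals all_analysis.
From mathcomp Require Import ring lra zify.
Set Implicit Arguments. Unset Strict Implicit. Unset Printing Implicit Defensive.
Import Order.TTheory GRing.Theory Num.Theory.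
Local Open Scope ring_scope.

(* Let p = trunc(log m) and sort the indices into dyadic shells
   S_D = {i | 2^(D-p) < |b_i| <= 2^(D+1-p)}, D < p.  The weak-l1 bound gives each shell mass
   v_D = |S_D| 2^(D-p) at most 1, while |b|_1 <= 2 sum_D v_D + 2.  For a scale k, with
   l = N 2^k and alpha N >= 2, cut [N 2^k, 2 N 2^k) into N windows of 2^k consecutive shells.
   If some window has mass > 3, let D1 be its first shell with v_D1 >= 1/l and
   I1 = {i | |b_i| > 2^(D1-p)}.  Given lambda with l1 mass at most 1 on I1, the indices with
   |b_i| < 2 |lambda_i| carry at most mass 2 of the window, so some shell D >= D1 of the window
   keeps mass >= 1/l on the indices where |b_i| >= 2 |lambda_i|; these form I2.  Then
   m/n1 >= 2^D1 >= 2^l, and m/n2 <= (m/n1) l 2^(D-D1) <= (m/n1)^(1+alpha) because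
   D - D1 < 2^k and alpha D1 >= 2^(k+1).  If instead every window of the O(log log m) scales
   between about log log m and log m has mass <= 3, the shells below p carry total mass
   O(log log m), contradicting |b|_1 >= C (log log m)^2. *)

Lemma card_set_count (T : finType) (P : pred T) :
  #|[set i | P i]| = count P (enum T).
Proof. by rewrite cardsE cardE size_filter -enumT. Qed.

Lemma sorted_nth_ge_count (R : realType) (s : seq R) (t : R) (k : nat) :
  sorted (fun x y : R => y <= x) s -> (0 < k)%N ->
  (k <= count (fun x : R => (t <= x)%R) s)%N -> t <= nth 0 s k.-1.
Proof.
move=> s_sorted k_gt0 k_le; rewrite leNgt; apply/negP => nth_lt.
have k_size : (k.-1 < size s)%N.
  by rewrite prednK // (leq_trans k_le (count_size _ _)).
have drop0 : count (fun x : R => t <= x) (drop k.-1 s) = 0%N.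
  apply/eqP; rewrite -leqn0 leqNgt -has_count; apply/negP => /(has_nthP 0) [j].
  rewrite size_drop nth_drop => j_lt.
  have ge_trans : transitive (fun x y : R => y <= x).
    by move=> y x z xy yz; apply: le_trans yz xy.
  have := sorted_leq_nth ge_trans (@lexx _ _) 0 s_sorted.
  move=> /(_ k.-1 (k.-1 + j)%N); rewrite !inE k_size -ltn_subRL j_lt leq_addr.
  by move=> /(_ isT isT isT) le_nth /(le_trans)/(_ le_nth); rewrite leNgt nth_lt.
move: k_le; rewrite -(cat_take_drop k.-1 s) count_cat drop0 addn0.
move=> /leq_trans/(_ (count_size _ _)); rewrite size_take k_size.
by rewrite -ltnS prednK // ltnn.
Qed.

Lemma rearr_at_le_l1_norm (R : realType) (m : nat) (b : 'I_m -> R) i :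
  rearr_at b i <= l1_norm b.
Proof.
rewrite /rearr_at; have [i_lt|i_ge] := ltnP i.-1 (size (rearr b)); last first.
  by rewrite nth_default // sumr_ge0.
have : nth 0 (rearr b) i.-1 \in rearr b by apply: mem_nth.
rewrite /rearr mem_sort => /mapP [j _ ->].
by rewrite /l1_norm (bigD1 j) //= lerDl sumr_ge0.
Qed.

Lemma weak_l1_rearr_at (R : realType) (m : nat) (b : 'I_m -> R) i :
  weak_l1_norm b <= 1 -> (1 <= i <= m)%N -> rearr_at b i * i%:R <= 1.
Proof.
move=> b_weak /andP [i_ge1 i_le].
have i_gt0 : (0 : R) < i%:R by rewrite ltr0n.
have S_inf : has_inf [set M : R | 0 < M /\ forall j : nat, (1 <= j <= m)%N ->
                        rearr_at b j <= M / j%:R]%classic.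
  split; last by exists 0 => M [/ltW].
  exists ((1 + l1_norm b) * (m%:R + 1)); split.
    by rewrite mulr_gt0 // ltr_wpDr ?sumr_ge0.
  move=> j /andP [j_ge1 j_le]; have j_gt0 : (0 : R) < j%:R by rewrite ltr0n.
  apply: le_trans (rearr_at_le_l1_norm b j) _.
  rewrite ler_pdivlMr // ler_pM ?sumr_ge0 ?ler0n ?lerDr //.
  by rewrite (le_trans (y := m%:R)) ?ler_nat ?lerDl.
apply/ler_addgt0Pr => e e_gt0.
have [M [M_gt0 HM] M_lt] := inf_adherent e_gt0 S_inf.
have := HM i; rewrite i_ge1 i_le ler_pdivlMr // => /(_ isT) /le_trans; apply.
by apply/ltW/(lt_le_trans M_lt); rewrite lerD2r.
Qed.

Lemma weak_l1_level_set (R : realType) (m : nat) (b : 'I_m -> R) (t : R) :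
  weak_l1_norm b <= 1 -> 0 < t -> #|[set i | t <= `|b i|]|%:R * t <= 1.
Proof.
move=> b_weak t_gt0; set k := #|_|.
have [->|k_gt0] := posnP k; first by rewrite mul0r.
have k_le : (k <= m)%N by rewrite -[m]card_ord max_card.
apply: le_trans (weak_l1_rearr_at (i := k) b_weak _); last by rewrite k_gt0 k_le.
rewrite mulrC ler_wpM2r // /rearr_at; apply: sorted_nth_ge_count => //.
  by apply: sort_sorted => x y; exact: le_total.
by rewrite /rearr (permP (permEl (perm_sort _ _))) count_map /k card_set_count.
Qed.

Definition dyadic (R : realType) (p D : nat) : R := 2 ^+ D / 2 ^+ p.

Lemma dyadic_gt0 (R : realType) p D : 0 < dyadic R p D.
Proof. by rewrite divr_gt0 // exprn_gt0. Qed.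

Lemma dyadicD (R : realType) p D n : dyadic R p (D + n) = dyadic R p D * 2 ^+ n.
Proof. by rewrite /dyadic exprD mulrAC. Qed.

Lemma dyadicS (R : realType) p D : dyadic R p D.+1 = 2 * dyadic R p D.
Proof. by rewrite /dyadic exprS mulrA. Qed.

Lemma dyadic_id (R : realType) p : dyadic R p p = 1.
Proof. by rewrite /dyadic divff // expf_neq0. Qed.

Lemma ler_dyadic (R : realType) p D D' : (D <= D')%N -> dyadic R p D <= dyadic R p D'.
Proof. by move=> DD'; rewrite ler_pM2r ?invr_gt0 ?exprn_gt0 // ler_eXn2l // ltr1n. Qed.

Lemma dyadic_index (R : realType) p n (x : R) :
  dyadic R p 0 < x -> x <= dyadic R p n ->
  exists2 D, (D < n)%N & dyadic R p D < x <= dyadic R p D.+1.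
Proof.
move=> x_gt; elim: n => [|n IHn] x_le; first by rewrite ltNge x_le in x_gt.
have [/IHn [D D_lt x_in]|x_gt'] := leP x (dyadic R p n); last by exists n; rewrite ?x_gt'.
by exists D; rewrite // ltnW.
Qed.

Lemma exp2_le_ratio (R : realType) (m n p D : nat) :
  (2 ^ p <= m)%N -> (0 < n)%N -> n%:R * dyadic R p D <= 1 ->
  2 ^+ D <= m%:R / n%:R :> R.
Proof.
move=> pm n_gt0 nD; rewrite ler_pdivlMr ?ltr0n //.
have -> : 2 ^+ D * n%:R = 2 ^+ p * (n%:R * dyadic R p D) :> R.
  by rewrite /dyadic; field; rewrite expf_neq0.
by rewrite (le_trans (ler_wpM2l _ nD)) ?exprn_ge0 // mulr1 -natrX ler_nat.
Qed.

Lemma ratio_le_dyadic (R : realType) (m n l p D : nat) :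
  (0 < n)%N -> (0 < l)%N -> 1 / l%:R <= n%:R * dyadic R p D ->
  m%:R / n%:R <= m%:R * l%:R * dyadic R p D :> R.
Proof.
move=> n_gt0 l_gt0; rewrite ler_pdivrMr ?ltr0n // => ln.
rewrite ler_pdivrMr ?ltr0n // -mulrA -mulrA -{1}[m%:R]mulr1 ler_wpM2l //.
by rewrite mulrC [l%:R * _]mulrC mulrA.
Qed.

Lemma ratio_le_powR (R : realType) (alpha : R) (m n1 n2 l p D1 D e : nat) :
  (2 ^ p <= m)%N -> 0 <= alpha -> (0 < n1)%N -> (0 < n2)%N -> (0 < l)%N ->
  n1%:R * dyadic R p D1 <= 1 -> 1 / l%:R <= n2%:R * dyadic R p D ->
  (D1 <= D)%N -> (l * 2 ^ (D - D1) <= 2 ^ e)%N -> e%:R <= D1%:R * alpha ->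
  m%:R / n2%:R <= powR (m%:R / n1%:R) (1 + alpha).
Proof.
move=> pm alpha_ge0 n1_gt0 n2_gt0 l_gt0 n1D1 n2D D1D le_e e_le.
set X := m%:R / n1%:R.
have X_ge : 2 ^+ D1 <= X := exp2_le_ratio pm n1_gt0 n1D1.
have X_gt0 : 0 < X by apply: lt_le_trans X_ge; rewrite exprn_gt0.
have mD1_le : m%:R * dyadic R p D1 <= X.
  rewrite ler_pdivlMr ?ltr0n // -mulrA [_ * n1%:R]mulrC.
  by rewrite -{2}[m%:R]mulr1 ler_wpM2l.
(* [2 ^ (D - D1) l <= 2 ^ e <= 2 ^ (alpha D1) <= X ^ alpha] *)
have shift_le : l%:R * 2 ^+ (D - D1) <= powR X alpha.
  apply: le_trans (_ : (2 : R) ^+ e <= _); first by rewrite -natrX -natrM -natrX ler_nat.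
  have pow_nneg : (2 : R) ^+ D1 \in Num.nneg by rewrite nnegrE exprn_ge0.
  have X_nneg : X \in Num.nneg by rewrite nnegrE ltW.
  apply: le_trans (ge0_ler_powR alpha_ge0 pow_nneg X_nneg X_ge).
  rewrite -powR_mulrn // -[(2 : R) ^+ D1]powR_mulrn // -powRrM.
  by apply: ler_powR; rewrite ?ler1n.
apply: le_trans (ratio_le_dyadic m n2_gt0 l_gt0 n2D) _.
have -> : dyadic R p D = dyadic R p D1 * 2 ^+ (D - D1) by rewrite -dyadicD subnKC.
rewrite powRD ?(gt_eqF X_gt0) ?implybT // powRr1 ?(ltW X_gt0) //.
rewrite (_ : _ * _ * (_ * _) = m%:R * dyadic R p D1 * (l%:R * 2 ^+ (D - D1))); last by ring.
by apply: ler_pM; rewrite ?mulr_ge0 ?ler0n ?exprn_ge0 ?(ltW (dyadic_gt0 _ _ _)).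
Qed.

Lemma first_index_ge (R : realType) (v : nat -> R) (c : R) (K : nat) :
  c *+ K < \sum_(t < K) v t ->
  exists t1, [/\ (t1 < K)%N, c <= v t1 & forall t, (t < t1)%N -> v t < c].
Proof.
move=> sum_gt.
have [[t Pt]|none] := boolp.pselect (exists t, (t < K)%N && (c <= v t)).
  have [t1 /andP [t1K ct1] t1_min] := ex_minnP (ex_intro (fun t => (t < K)%N && (c <= v t)) t Pt).
  exists t1; split => // s st1; rewrite ltNge; apply/negP => cs.
  by have := t1_min s; rewrite (ltn_trans st1 t1K) cs leqNgt st1 => /(_ isT).
suff : \sum_(t < K) v t <= c *+ K by rewrite leNgt sum_gt.
rewrite -[in leRHS](card_ord K) -sumr_const; apply: ler_sum => t _.
by rewrite leNgt; apply/negP => ct; apply: none; exists t; rewrite ltn_ord ltW.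
Qed.

Lemma double_le_exp2 k : (0 < k)%N -> (2 * k <= 2 ^ k)%N.
Proof.
elim: k => // k IHk _; have [->//|k_gt0] := posnP k.
have := IHk k_gt0; have : (2 <= 2 ^ k)%N by rewrite -{1}(expn1 2) leq_exp2l.
rewrite expnS; lia.
Qed.

Lemma leq_mul_exp2_exp2 N k : (N <= k)%N -> (N * 2 ^ k <= 2 ^ (2 ^ k))%N.
Proof.
move=> Nk; have [->//|N_gt0] := posnP N.
apply: leq_trans (_ : 2 ^ k * 2 ^ k <= _)%N.
  by rewrite leq_mul2r (leq_trans Nk (ltnW (ltn_expl _ _))) ?orbT.
by rewrite -expnD addnn -mul2n leq_exp2l // double_le_exp2 // (leq_trans N_gt0).
Qed.

Lemma lt0n_of_inv_le (R : realType) (l n : nat) (x : R) :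
  (0 < l)%N -> 1 / l%:R <= n%:R * x -> (0 < n)%N.
Proof.
move=> l_gt0; rewrite lt0n; apply: contraTneq => ->.
by rewrite mul0r -ltNge divr_gt0 ?ltr0n.
Qed.

Lemma inv_mul_le (R : realType) (l n : nat) (x : R) :
  (0 < l)%N -> (0 < n)%N -> 1 / l%:R <= n%:R * x -> 1 / (l%:R * n%:R) <= x.
Proof.
move=> l_gt0 n_gt0; rewrite !ler_pdivrMr ?mulr_gt0 ?ltr0n //.
by rewrite (mulrC l%:R) mulrA (mulrC x).
Qed.

Lemma dyadic_ratio_bounds (R : realType) (alpha : R) (m n1 n2 N k p D1 D : nat) :
  (2 ^ p <= m)%N -> 0 <= alpha -> 2 <= alpha * N%:R -> (N <= k)%N ->
  (N * 2 ^ k <= D1)%N -> (D1 <= D < D1 + 2 ^ k)%N -> (0 < n2)%N -> (n2 <= n1)%N ->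
  n1%:R * dyadic R p D1 <= 1 -> 1 / (N * 2 ^ k)%:R <= n2%:R * dyadic R p D ->
  [/\ powR (2 : R) ((N * 2 ^ k)%:R / 2) <= m%:R / n1%:R, m%:R / n1%:R <= m%:R / n2%:R :> R
    & m%:R / n2%:R <= powR (m%:R / n1%:R) (1 + alpha)].
Proof.
move=> pm alpha_ge0 alphaN Nk lD1 /andP [D1D DD1] n2_gt0 n21 n1_le n2_ge.
set l := (N * 2 ^ k)%N.
have N_gt0 : (0 < N)%N by rewrite lt0n; apply: contraTneq alphaN => ->; rewrite mulr0 -ltNge.
have l_gt0 : (0 < l)%N by rewrite muln_gt0 N_gt0 expn_gt0.
have n1_gt0 : (0 < n1)%N := leq_trans n2_gt0 n21.
have shift : (l * 2 ^ (D - D1) <= 2 ^ (2 ^ k.+1))%N.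
  rewrite expnS mul2n -addnn expnD; apply: leq_mul; first exact: leq_mul_exp2_exp2.
  by rewrite leq_exp2l // leq_subLR ltnW // addnC.
have e_le : (2 ^ k.+1)%:R <= D1%:R * alpha.
  apply: le_trans (_ : alpha * l%:R <= _); last by rewrite mulrC ler_wpM2r // ler_nat.
  by rewrite expnS /l !natrM mulrA ler_wpM2r.
split.
- apply: le_trans (exp2_le_ratio pm n1_gt0 n1_le).
  rewrite -powR_mulrn // ler_powR ?ler1n // ler_pdivrMr // (le_trans _ (ler_peMr _ _)) ?ler_nat //.
  by rewrite ler1n.
- by rewrite ler_wpM2l // lef_pV2 ?posrE ?ltr0n // ler_nat.
- exact: ratio_le_powR pm alpha_ge0 n1_gt0 n2_gt0 l_gt0 n1_le n2_ge D1D shift e_le.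
Qed.

Definition good_pair (R : realType) (alpha : R) (m : nat) (b : 'I_m -> R) (l : nat)
    (I1 : {set 'I_m}) : Prop :=
  forall lambda : 'I_m -> R, \sum_(i in I1) `|lambda i| <= 1 ->
  exists I2 : {set 'I_m},
    [/\ I2 \subset I1,
        [/\ powR (2 : R) (l%:R / 2) <= m%:R / #|I1|%:R,
            (m%:R / #|I1|%:R : R) <= m%:R / #|I2|%:R &
            m%:R / #|I2|%:R <= powR (m%:R / #|I1|%:R : R) (1 + alpha)] &
        [/\ (forall i, i \in I1 -> (1 / (l%:R * #|I1|%:R) : R) <= `|b i|),
            (forall i, i \in I2 -> (1 / (l%:R * #|I2|%:R) : R) <= `|b i|) &
            (forall i, i \in I2 -> 2 * `|lambda i| <= `|b i|)]].

Lemma ler_sum_ord_widen (R : realType) (v : nat -> R) (x y : nat) :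
  (forall D, 0 <= v D) -> (x <= y)%N -> \sum_(D < x) v D <= \sum_(D < y) v D.
Proof.
move=> v_ge0 xy; rewrite -(subnKC xy) big_split_ord /= lerDl.
exact: sumr_ge0.
Qed.

Lemma sum_windows_le (R : realType) (v : nat -> R) (E c n : nat) (M : R) :
  (forall i, (i < n)%N -> \sum_(t < c) v (E + i * c + t)%N <= M) ->
  \sum_(D < E + n * c) v D <= \sum_(D < E) v D + M * n%:R.
Proof.
elim: n => [|n IHn] win_le; first by rewrite mul0n addn0 mulr0 addr0.
rewrite mulSnr addnA big_split_ord /= -[n.+1]addn1 natrD mulrDr mulr1 addrA.
by apply: lerD; [apply: IHn => i /ltnW; apply: win_le | apply: win_le].
Qed.

(* Scale [k] contributes the [N] windows of length [2 ^ k] covering [[N 2^k, 2 N 2^k)]. *)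
Lemma sum_dyadic_windows_le (R : realType) (v : nat -> R) (N k0 n : nat) :
  (forall D, v D <= 1) ->
  (forall k i, (k0 <= k < k0 + n)%N -> (i < N)%N ->
     \sum_(t < 2 ^ k) v (N * 2 ^ k + i * 2 ^ k + t)%N <= 3) ->
  \sum_(D < N * 2 ^ (k0 + n)) v D <= (N * 2 ^ k0)%:R + 3 * (N * n)%:R.
Proof.
move=> v_le1; elim: n => [|n IHn] win_le.
  rewrite addn0 muln0 mulr0 addr0 -[X in _ <= X%:R](card_ord (N * 2 ^ k0)) -sumr_const.
  exact: ler_sum.
have -> : (N * 2 ^ (k0 + n.+1) = N * 2 ^ (k0 + n) + N * 2 ^ (k0 + n))%N.
  by rewrite addnS expnS mulnCA mul2n -addnn.
apply: le_trans (sum_windows_le (M := 3) _) _.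
  by move=> i i_lt; apply: win_le; rewrite // leq_addr addnS ltnSn.
rewrite mulnS natrD mulrDr addrA addrAC lerD2r.
by apply: IHn => k i /andP [k0k kn]; apply: win_le; rewrite k0k addnS ltnS ltnW.
Qed.

Section DyadicShells.

Variables (R : realType) (m : nat) (b : 'I_m -> R) (p : nat).
Hypothesis b_weak : weak_l1_norm b <= 1.

Definition shell D : {set 'I_m} :=
  [set i | dyadic R p D < `|b i| <= dyadic R p D.+1].

Definition shell_mass D : R := #|shell D|%:R * dyadic R p D.

Lemma abs_le1 i : `|b i| <= 1.
Proof.
have [b_gt0|] := ltrP 0 `|b i|; last by move/le_trans; apply.
apply: le_trans (weak_l1_level_set b_weak b_gt0).
rewrite ler_peMl // ler1n card_gt0; apply/set0Pn; exists i; by rewrite inE.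
Qed.

Lemma shell_mass_ge0 D : 0 <= shell_mass D.
Proof. by rewrite mulr_ge0 // ltW // dyadic_gt0. Qed.

Definition upper D : {set 'I_m} := [set i | dyadic R p D < `|b i|].

Lemma shell_subset_upper D D' : (D <= D')%N -> shell D' \subset upper D.
Proof.
move=> DD'; apply/fintype.subsetP => i; rewrite !inE => /andP [lo _].
exact: le_lt_trans (ler_dyadic R p DD') lo.
Qed.

Lemma upper_mass_le1 D : #|upper D|%:R * dyadic R p D <= 1.
Proof.
apply: le_trans (weak_l1_level_set b_weak (dyadic_gt0 R p D)).
rewrite ler_wpM2r ?(ltW (dyadic_gt0 _ _ _)) // ler_nat subset_leq_card //.
by apply/fintype.subsetP => i; rewrite !inE => /ltW.
Qed.

Lemma shell_mass_le1 D : shell_mass D <= 1.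
Proof.
apply: le_trans (upper_mass_le1 D); rewrite ler_wpM2r ?(ltW (dyadic_gt0 _ _ _)) // ler_nat.
exact/subset_leq_card/shell_subset_upper.
Qed.

Lemma shell_lt D i : i \in shell D -> (D < p)%N.
Proof.
rewrite inE ltnNge => /andP [lo _]; apply/negP => pD.
have := le_lt_trans (ler_dyadic R p pD) lo.
by rewrite dyadic_id ltNge abs_le1.
Qed.

Lemma shell_disjoint D D' i : i \in shell D -> i \in shell D' -> D = D'.
Proof.
rewrite !inE => /andP [lo hi] /andP [lo' hi'].
wlog DD' : D D' lo hi lo' hi' / (D < D')%N.
  by move=> wlog; case: (ltngtP D D') => // [/wlog|/wlog] ->.
by have := le_lt_trans (le_trans hi (ler_dyadic R p DD')) lo'; rewrite ltxx.
Qed.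

Lemma abs_le_shells i :
  `|b i| <= dyadic R p 0 + \sum_(D < p | i \in shell D) dyadic R p D.+1.
Proof.
have [le0|gt0] := leP `|b i| (dyadic R p 0).
  by rewrite ler_wpDr // sumr_ge0 // => D _; exact/ltW/dyadic_gt0.
have le_top : `|b i| <= dyadic R p p by rewrite dyadic_id abs_le1.
have [D D_lt iD] := dyadic_index gt0 le_top.
rewrite (bigD1 (Ordinal D_lt)) /= ?inE ?iD //; case/andP: iD => _ le.
have rest_ge0 : 0 <= \sum_(E < p | (i \in shell E) && (E != Ordinal D_lt)) dyadic R p E.+1.
  by apply: sumr_ge0 => E _; exact/ltW/dyadic_gt0.
by rewrite (le_trans le) // addrCA lerDl addr_ge0 // ltW ?dyadic_gt0.
Qed.

Lemma l1_norm_le_shell_mass :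
  l1_norm b <= 2 * \sum_(D < p) shell_mass D + m%:R * dyadic R p 0.
Proof.
apply: le_trans (ler_sum _ (fun i _ => abs_le_shells i)) _.
rewrite big_split /= sumr_const card_ord (mulr_natl (dyadic R p 0)) addrC lerD2r.
under eq_bigr do rewrite big_mkcond /=.
rewrite exchange_big mulr_sumr /=; apply: ler_sum => D _.
by rewrite -big_mkcond /= sumr_const /shell_mass dyadicS -mulrnAr -(mulr_natl (dyadic R p D)).
Qed.

Definition dominated (lam : 'I_m -> R) : {set 'I_m} := [set i | 2 * `|lam i| <= `|b i|].

Lemma shell_mass_le_split (lam : 'I_m -> R) D :
  shell_mass D <= #|shell D :&: dominated lam|%:R * dyadic R p D
                  + 2 * \sum_(i in shell D) `|lam i|.
Proof.
rewrite /shell_mass -(cardsID (dominated lam) (shell D)) natrD mulrDl lerD2l.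
rewrite mulr_natl -sumr_const mulr_sumr big_mkcond [leRHS]big_mkcond /=.
apply: ler_sum => i _; rewrite !inE.
case: (leP (2 * `|lam i|) `|b i|) => [_|bad] /=; first by case: ifP => // _; rewrite mulr_ge0.
by case: ifP => // /andP [lo _]; apply/ltW/(lt_trans lo).
Qed.

Lemma sum_shell_weight_le (w : 'I_m -> R) (I : {set 'I_m}) E K (P : pred 'I_K) :
  (forall i, 0 <= w i) -> (forall t, P t -> shell (E + t) \subset I) ->
  \sum_(t < K | P t) \sum_(i in shell (E + t)) w i <= \sum_(i in I) w i.
Proof.
move=> w_ge0 sub.
rewrite (exchange_big_dep (mem I)) /=; last by move=> t i /sub/fintype.subsetP; apply.
apply: ler_sum => i _.
have [t0 /andP [Pt0 it0]|none] := pickP (fun t : 'I_K => P t && (i \in shell (E + t))).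
  rewrite (bigD1 t0) ?Pt0 ?it0 //= big1 ?addr0 // => t /andP [/andP [_ it] tt0].
  by move: tt0; have /addnI/val_inj -> := shell_disjoint it0 it; rewrite eqxx.
by rewrite big_pred0 // => t; exact: none.
Qed.

(* Off [dominated lam] we have [|b_i| < 2 |lam_i|], so the undominated parts of the
   shells above [t1] carry mass at most [2]; the window's mass exceeds [c K + 2]. *)
Lemma heavy_dominated_shell (lam : 'I_m -> R) (I : {set 'I_m}) (c : R) E K t1 :
  c *+ K <= 1 -> 3 < \sum_(t < K) shell_mass (E + t) ->
  (forall t, (t < t1)%N -> shell_mass (E + t) < c) ->
  (forall t, (t1 <= t)%N -> shell (E + t) \subset I) ->
  \sum_(i in I) `|lam i| <= 1 ->
  exists2 t, (t1 <= t < K)%N &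
    c <= #|shell (E + t) :&: dominated lam|%:R * dyadic R p (E + t).
Proof.
move=> cK mass_gt below above lam_le.
have [//|none] := boolp.pselect (exists2 t, (t1 <= t < K)%N &
    c <= #|shell (E + t) :&: dominated lam|%:R * dyadic R p (E + t)).
have shell_le (t : 'I_K) : shell_mass (E + t) <=
    c + (if (t1 <= t)%N then 2 * \sum_(i in shell (E + t)) `|lam i| else 0).
  case: leqP => [t1t|tt1]; last by rewrite addr0 ltW ?below.
  apply: le_trans (shell_mass_le_split lam (E + t)) _; rewrite lerD2r ltW // ltNge.
  by apply/negP => ct; apply: none; exists t; rewrite ?t1t ?ltn_ord.
suff : \sum_(t < K) shell_mass (E + t) <= 1 + 2 * 1 by lra.
apply: le_trans (ler_sum _ (fun t _ => shell_le t)) _.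
rewrite big_split /= sumr_const card_ord lerD // -big_mkcond /= -mulr_sumr ler_wpM2l //.
exact: le_trans (sum_shell_weight_le (fun i => normr_ge0 (lam i)) (fun t : 'I_K => above t)) lam_le.
Qed.

Lemma heavy_window_good_pair (alpha : R) (N k E : nat) :
  (2 ^ p <= m)%N -> 0 <= alpha -> 2 <= alpha * N%:R -> (N <= k)%N ->
  (N * 2 ^ k <= E)%N -> 3 < \sum_(t < 2 ^ k) shell_mass (E + t) ->
  exists2 I1, (N * 2 ^ k < p)%N & good_pair alpha b (N * 2 ^ k) I1.
Proof.
move=> pm alpha_ge0 alphaN Nk lE mass_gt.
have N_gt0 : (0 < N)%N by rewrite lt0n; apply: contraTneq alphaN => ->; rewrite mulr0 -ltNge.
set K := (2 ^ k)%N; set l := (N * K)%N.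
have l_gt0 : (0 < l)%N by rewrite muln_gt0 N_gt0 expn_gt0.
have cK : (1 / l%:R : R) *+ K <= 1.
  rewrite -(mulr_natr (1 / l%:R)) /l natrM div1r invfM -mulrA mulVf ?pnatr_eq0 -?lt0n ?expn_gt0 //.
  by rewrite mulr1 invf_le1 ?ler1n ?ltr0n.
have cK_lt : (1 / l%:R) *+ K < \sum_(t < K) shell_mass (E + t).
  by apply: le_lt_trans cK (lt_trans _ mass_gt); lra.
have [t1 [t1K ct1 t1_min]] := first_index_ge (v := fun t => shell_mass (E + t)) cK_lt.
set D1 := (E + t1)%N; set I1 := upper D1.
have above t : (t1 <= t)%N -> shell (E + t) \subset I1.
  by move=> t1t; rewrite shell_subset_upper // leq_add2l.
have n1_ge : 1 / l%:R <= #|I1|%:R * dyadic R p D1.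
  apply: le_trans ct1 _; rewrite ler_wpM2r ?(ltW (dyadic_gt0 _ _ _)) // ler_nat.
  exact/subset_leq_card/above.
have n1_le : #|I1|%:R * dyadic R p D1 <= 1 := upper_mass_le1 D1.
have n1_gt0 := lt0n_of_inv_le l_gt0 n1_ge.
have [i iD1] : exists i, i \in shell D1.
  by apply/set0Pn; rewrite -card_gt0 (lt0n_of_inv_le l_gt0 ct1).
have lD1 : (l <= D1)%N by rewrite (leq_trans lE) ?leq_addr.
exists I1 => [|lam lam_le]; first exact: leq_ltn_trans lD1 (shell_lt iD1).
have [t /andP [t1t tK] n2_ge] := heavy_dominated_shell cK mass_gt t1_min above lam_le.
set I2 := shell (E + t) :&: dominated lam.
have n2_gt0 := lt0n_of_inv_le l_gt0 n2_ge.
have I21 : I2 \subset I1 := fintype.subset_trans (subsetIl _ _) (above _ t1t).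
exists I2; split => //; last first.
  split=> j.
  - rewrite inE => lo; exact/ltW/(le_lt_trans (inv_mul_le l_gt0 n1_gt0 n1_ge) lo).
  - case/setIP; rewrite inE => /andP [lo _] _.
    exact/ltW/(le_lt_trans (inv_mul_le l_gt0 n2_gt0 n2_ge) lo).
  - by case/setIP => _; rewrite inE.
have D1D : (D1 <= E + t < D1 + K)%N by rewrite leq_add2l t1t -addnA ltn_add2l ltn_addl.
exact: dyadic_ratio_bounds pm alpha_ge0 alphaN Nk lD1 D1D n2_gt0 (subset_leq_card I21) n1_le n2_ge.
Qed.

Lemma l1_norm_lt_light_windows (N k0 n : nat) :
  (m < 2 ^ p.+1)%N -> (p <= N * 2 ^ (k0 + n))%N ->
  (forall k i, (k0 <= k < k0 + n)%N -> (i < N)%N ->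
     \sum_(t < 2 ^ k) shell_mass (N * 2 ^ k + i * 2 ^ k + t) <= 3) ->
  l1_norm b < 2 * ((N * 2 ^ k0)%:R + 3 * (N * n)%:R) + 2.
Proof.
move=> mp p_le light.
have small : m%:R * dyadic R p 0 < 2.
  rewrite /dyadic expr0 mul1r ltr_pdivrMr ?exprn_gt0 // -natrX -natrM ltr_nat.
  by rewrite -expnS.
apply: le_lt_trans l1_norm_le_shell_mass _; apply: ler_ltD small; rewrite ler_wpM2l //.
apply: le_trans (ler_sum_ord_widen shell_mass_ge0 p_le) _.
exact: sum_dyadic_windows_le shell_mass_le1 light.
Qed.

End DyadicShells.

Lemma ln2_gt0 (R : realType) : (0 : R) < ln 2.
Proof. by rewrite ln_gt0 // ltr1n. Qed.

Lemma log2_exp2 (R : realType) n : log2 (2 ^+ n : R) = n%:R.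
Proof. by rewrite /log2 lnXn // mulrnAl divff // gt_eqF // ln2_gt0. Qed.

Lemma log2_bounds (R : realType) (x : R) n :
  2 ^+ n <= x < 2 ^+ n.+1 -> n%:R <= log2 x < n.+1%:R.
Proof.
case/andP => lo hi; have x_gt0 : 0 < x by apply: lt_le_trans lo; rewrite exprn_gt0.
rewrite -(log2_exp2 R n) -(log2_exp2 R n.+1) /log2.
by rewrite ler_pM2r ?ltr_pM2r ?invr_gt0 ?ln2_gt0 // ler_ln ?ltr_ln ?posrE ?exprn_gt0 ?lo.
Qed.

Lemma log2_trunc_log (R : realType) n : (0 < n)%N ->
  (trunc_log 2 n)%:R <= log2 (n%:R : R) < (trunc_log 2 n).+1%:R.
Proof.
move=> n_gt0; apply: log2_bounds; rewrite -!natrX ler_nat ltr_nat.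
exact: trunc_log_bounds.
Qed.

Lemma log2_log2_trunc_log (R : realType) n : (2 <= n)%N ->
  (trunc_log 2 (trunc_log 2 n))%:R <= log2 (log2 (n%:R : R))
    < (trunc_log 2 (trunc_log 2 n)).+1%:R.
Proof.
move=> n_ge2; set p := trunc_log 2 n.
have p_gt0 : (0 < p)%N by rewrite trunc_log_gt0.
have /andP [lo hi] := log2_trunc_log R (ltnW n_ge2).
have /andP [plo phi] := trunc_log_bounds (isT : (1 < 2)%N) p_gt0.
apply: log2_bounds; apply/andP; split.
  by apply: le_trans lo; rewrite -natrX ler_nat.
by apply: lt_le_trans hi _; rewrite -natrX ler_nat.
Qed.

Lemma window_count_le N a q P : (2 ^ q <= 2 * P)%N -> (0 < P)%N ->
  (N * 2 ^ (N + a + q) + 3 * (N * P.+1) <= (N * 2 ^ (N + a).+1 + 6 * N) * P)%N.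
Proof.
move=> qP P_gt0; rewrite expnD expnS mulnDl; apply: leq_add.
  by rewrite mulnA mulnCA -[in leqRHS]mulnA [in leqRHS]mulnCA leq_mul2l qP orbT.
have := leq_pmulr N P_gt0; rewrite mulnS -mulnA; lia.
Qed.

Section Scales.

Variables (R : realType) (m : nat) (b : 'I_m -> R) (N a : nat).
Hypotheses (m_ge4 : (4 <= m)%N) (b_weak : weak_l1_norm b <= 1).

(* The scales [k0 <= k <= k0 + P] are [O(log log m)] many, and already at [k0] the
   window length [l = N 2^k0] exceeds [A log log m]. *)
Let p := trunc_log 2 m.
Let P := trunc_log 2 p.
Let q := (trunc_log 2 P).+1.
Let k0 := (N + a + q)%N.
Let LL := log2 (log2 (m%:R : R)).

Let m_gt1 : (1 < m)%N. Proof. exact: leq_trans m_ge4. Qed.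

Let LL_bounds : P%:R <= LL < P.+1%:R. Proof. exact: log2_log2_trunc_log. Qed.

Lemma heavy_window_exists :
  (0 < N)%N -> (2 * (N * 2 ^ (N + a).+1 + 6 * N)%:R + 3) * LL ^+ 2 <= l1_norm b ->
  exists k i, [/\ (k0 <= k < k0 + P.+1)%N, (i < N)%N &
    3 < \sum_(t < 2 ^ k) shell_mass b p (N * 2 ^ k + i * 2 ^ k + t)].
Proof.
set K := (N * _ + _)%N => N_gt0 b_l1; apply: boolp.contrapT => none.
have light k i : (k0 <= k < k0 + P.+1)%N -> (i < N)%N ->
    \sum_(t < 2 ^ k) shell_mass b p (N * 2 ^ k + i * 2 ^ k + t) <= 3.
  by move=> k_in i_lt; rewrite leNgt; apply/negP => heavy; apply: none; exists k, i.
have /andP [_ mp] := trunc_log_bounds (isT : (1 < 2)%N) (ltnW m_gt1).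
have P_gt0 : (0 < P)%N by rewrite trunc_log_gt0 /= trunc_log_max.
have p_le : (p <= N * 2 ^ (k0 + P.+1))%N.
  apply: leq_trans (ltnW (trunc_log_ltn p (isT : (1 < 2)%N))) _.
  by rewrite (leq_trans _ (leq_pmull _ _)) // leq_exp2l // leq_addl.
have qP : (2 ^ q <= 2 * P)%N by rewrite expnS leq_mul2l trunc_logP.
have S_le : (N * 2 ^ k0)%:R + 3 * (N * P.+1)%:R <= K%:R * P%:R :> R.
  by rewrite -natrM -natrM -natrD ler_nat window_count_le.
have /andP [LLP _] := LL_bounds.
have KP_le : K%:R * P%:R <= K%:R * LL by rewrite ler_wpM2l.
have LL_ge1 : 1 <= LL by apply: le_trans LLP; rewrite ler1n.
have LL2 : 2 * (K%:R * LL) + 3 * LL <= (2 * K%:R + 3) * LL ^+ 2.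
  rewrite mulrA -mulrDl ler_wpM2l ?addr_ge0 ?mulr_ge0 //.
  by rewrite expr2 ler_peMr // (le_trans ler01).
have := l1_norm_lt_light_windows b_weak mp p_le light; lra.
Qed.

Lemma scale_ge (A : R) k : (0 < N)%N -> 0 <= A -> A <= (2 ^ a)%:R -> (k0 <= k)%N ->
  A * LL <= (N * 2 ^ k)%:R.
Proof.
move=> N_gt0 A_ge0 A_le k0k; have /andP [LLP LLP1] := LL_bounds.
have Pq : (P < 2 ^ q)%N by rewrite trunc_log_ltn.
apply: le_trans (_ : (2 ^ a)%:R * (2 ^ q)%:R <= _).
  apply: ler_pM; rewrite ?(le_trans (ler0n _ P) LLP) //.
  by apply: le_trans (ltW LLP1) _; rewrite ler_nat.
rewrite -natrM -expnD ler_nat (leq_trans _ (leq_pmull _ N_gt0)) // leq_exp2l //.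
by rewrite (leq_trans _ k0k) // /k0 -addnA leq_addl.
Qed.

End Scales.

Theorem proposition3p1 (R : realType) (alpha A : R) :
  0 < alpha < 1 -> 0 < A ->
  exists C : R, forall (m : nat) (b : 'I_m -> R),
    (4 <= m)%N ->
    weak_l1_norm b <= 1 ->
    C * (log2 (log2 (m%:R : R))) ^+ 2 <= l1_norm b ->
    exists (l : nat) (I1 : {set 'I_m}),
      [/\ (0 < l)%N,
          A * log2 (log2 (m%:R : R)) <= l%:R,
          l%:R <= log2 (m%:R : R) &
          forall lambda : 'I_m -> R,
            \sum_(i in I1) `|lambda i| <= 1 ->
            exists I2 : {set 'I_m},
              [/\ I2 \subset I1,
                  (* (i) *)
                  [/\ powR (2 : R) (l%:R / 2) <= m%:R / #|I1|%:R,
                       (m%:R / #|I1|%:R : R) <= m%:R / #|I2|%:R &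
                       m%:R / #|I2|%:R <= powR (m%:R / #|I1|%:R : R) (1 + alpha)] &
                  (* (ii) *)
                  [/\ (forall i, i \in I1 -> (1 / (l%:R * #|I1|%:R) : R) <= `|b i|),
                       (forall i, i \in I2 -> (1 / (l%:R * #|I2|%:R) : R) <= `|b i|) &
                       (forall i, i \in I2 -> 2 * `|lambda i| <= `|b i|)]]].
Proof.
move=> /andP [alpha_gt0 _] A_gt0.
set N := (Num.truncn (2 / alpha)).+1.
have alphaN : 2 <= alpha * N%:R by rewrite mulrC -ler_pdivrMr //; apply/ltW/truncnS_gt.
set a := (Num.truncn A).+1.
have A_le : A <= (2 ^ a)%:R.
  by apply/ltW/(lt_le_trans (truncnS_gt A)); rewrite ler_nat ltnW // ltn_expl.
exists (2 * (N * 2 ^ (N + a).+1 + 6 * N)%:R + 3) => m b m_ge4 b_weak b_l1.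
have m_gt0 : (0 < m)%N by apply: leq_trans m_ge4.
have /andP [pm _] := trunc_log_bounds (isT : (1 < 2)%N) m_gt0.
have [k [i [/andP [k0k _] _ heavy]]] := heavy_window_exists m_ge4 b_weak (ltn0Sn _) b_l1.
have Nk : (N <= k)%N by rewrite (leq_trans _ k0k) // -addnA leq_addr.
have [I1 lp good] :=
  heavy_window_good_pair b_weak pm (ltW alpha_gt0) alphaN Nk (leq_addr _ _) heavy.
exists (N * 2 ^ k)%N, I1; split => //.
- by rewrite muln_gt0 expn_gt0.
- exact: scale_ge (ltn0Sn _) (ltW A_gt0) A_le k0k.
- have /andP [Lp _] := log2_trunc_log R m_gt0.
  by apply: le_trans Lp; rewrite ler_nat ltnW.
Qed.
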